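(* Let $(\Omega,\mathcal{F},\mathbb{P})$ be a nonatomic probability space, let $u:\mathbb{R}\to\mathbb{R}\cup\{-\infty\}$ be a utility function bounded from above, let $\alpha\in\mathbb{R}$ be such that $u(x)\ge\alpha$ for some $x\in\mathbb{R}$, and fix $1\le p<\infty$. Assume one of the following conditions: (i) $u(x)\le\alpha$ for all $x\in\mathbb{R}$; (ii) $\lim_{x\to\infty}\frac{x^p}{u(-x)}=0$. Then the set $\mathcal{A}_u^p=\{X\in L^p: \mathbb{E}[u(X)]\ge\alpha\}$ has empty interior in $L^p$.
   Context: A utility function is a nonconstant, increasing, concave function $u:\mathbb{R}\to\mathbb{R}\cup\{-\infty\}$. $L^p=L^p(\Omega,\mathcal{F},\mathbb{P})$ with its norm topology. *)

From HB Require Import structures.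
From mathcomp Require Import all_boot all_order all_algebra.
From mathcomp Require Import all_classical all_reals all_analysis.
Set Implicit Arguments. Unset Strict Implicit. Unset Printing Implicit Defensive.
Import Order.TTheory GRing.Theory Num.Theory.
Import numFieldNormedType.Exports.
Local Open Scope classical_set_scope.
Local Open Scope ring_scope.

Definition nonatomic d (T : measurableType d) (R : realType)
    (P : probability T R) : Prop :=
  forall A : set T, measurable A -> (0 < P A)%E ->
    exists B : set T, [/\ measurable B, B `<=` A, (0 < P B)%E & (P B < P A)%E].

Definition utility (R : realType) (u : R -> \bar R) : Prop :=
  [/\ (forall x : R, u x != +oo%E),
      (exists x y, u x != u y),
      (forall x y : R, x <= y -> (u x <= u y)%E) &
      (forall x y t : R, (0 < t)%R -> (t < 1)%R ->
         (t%:E * u x + (1 - t)%R%:E * u y <= u (t * x + (1 - t) * y)%R)%E)].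

(* L^p(Ω,F,P) as a set of real random variables: measurable with finite
   p-norm.  (The norm topology is invariant under a.e. equality.) *)
Definition Lp d (T : measurableType d) (R : realType) (P : probability T R)
    (p : R) : set (T -> R) := [set X | X \in Lfun P p%:E].

Definition Lp_dist d (T : measurableType d) (R : realType)
    (P : probability T R) (p : R) (X Y : T -> R) : \bar R :=
  'N[P]_p%:E [EFin \o (Y \- X)].

Definition acceptance_set d (T : measurableType d) (R : realType)
    (P : probability T R) (u : R -> \bar R) (p alpha : R) : set (T -> R) :=
  [set X | Lp P p X /\ (alpha%:E <= \int[P]_w u (X w))%E].

Definition Lp_interior d (T : measurableType d) (R : realType)
    (P : probability T R) (p : R) (S : set (T -> R)) : set (T -> R) :=
  [set X | Lp P p X /\ exists2 e : R, 0 < e &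
     forall Y, Lp P p Y -> (Lp_dist P p X Y < e%:E)%E -> S Y].

From HB Require Import structures.
From mathcomp Require Import all_boot all_order all_algebra.
From mathcomp Require Import all_classical all_reals all_analysis.
From mathcomp Require Import lra.
Set Implicit Arguments. Unset Strict Implicit. Unset Printing Implicit Defensive.
Import Order.TTheory GRing.Theory Num.Theory.
Import numFieldNormedType.Exports.
Local Open Scope classical_set_scope.
Local Open Scope ring_scope.

(* Let X be an interior point of A_u^p, the L^p-ball of radius e around X lying
   in A_u^p.  Nonatomicity gives events B of arbitrarily small probability m > 0
   inside a sublevel set {X <= K}.  The step perturbation X - c 1_B lies at
   L^p-distance (c^p m)^(1/p) from X, and if M bounds u from above then
   E[u(X - c 1_B)] <= M + (u(K - c) - M) m.  Under (i) pick K - c with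
   u(K - c) < alpha and m small.  Under (ii) pick c close to x with x^p m fixed:
   the distance stays below e while u(-x) m <= -x^p m / eps is as negative as we
   like, so the expected utility drops below alpha. *)

(* [u] is not assumed measurable, so [\int u (Y w)] is merely a difference of
   suprema over simple minorants; monotonicity survives nonetheless. *)
Lemma le_integral_pointwise d (T : measurableType d) (R : realType)
    (mu : {measure set T -> \bar R}) (f g : T -> \bar R) :
  (forall x, (f x <= g x)%E) -> (\int[mu]_x f x <= \int[mu]_x g x)%E.
Proof.
move=> fg; rewrite [leLHS]integralE [leRHS]integralE.
have fgT : {in [set: T], forall x, (f x <= g x)%E} by move=> x _; exact: fg.
apply: leeB; rewrite !ge0_integralTE //.
- apply: ereal_sup_le => _ /= [h hf <-]; exists h => // x.
  exact: le_trans (hf x) (funepos_le fgT (in_setT x)).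
- apply: ereal_sup_le => _ /= [h hf <-]; exists h => // x.
  exact: le_trans (hf x) (funeneg_le fgT (in_setT x)).
Qed.

Section indicator_step.
Context d (T : measurableType d) (R : realType) (P : probability T R).
Variables (B : set T) (m : R).
Hypotheses (mB : measurable B) (PB : P B = m%:E).

Lemma integral_cst_add_indic (a b : R) :
  (\int[P]_x (a + b * \1_B x)%:E = (a + b * m)%:E)%E.
Proof.
under eq_integral do rewrite EFinD EFinM.
rewrite integralD//; last 2 first.
- exact: finite_measure_integrable_cst.
- by apply: integrableZl => //; exact: integrable_indic.
rewrite integralZl//; last exact: integrable_indic.
rewrite integral_indic// setIT integral_cst//.
move: (probability_setT P) PB => /= -> ->.
by rewrite mule1 -EFinM -EFinD.
Qed.

Lemma Lnorm_scale_indic (c p : R) : 0 < p ->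
  ('N[P]_p%:E [EFin \o (fun w => (c * \1_B w)%R)] = ((`|c| `^ p * m) `^ p^-1)%:E)%E.
Proof.
move=> p0; rewrite unlock /=.
have -> : (\int[P]_x ((`|c * \1_B x| `^ p)%:E) = (0 + `|c| `^ p * m)%:E)%E.
  rewrite -integral_cst_add_indic; apply: eq_integral => x _.
  rewrite normrM add0r /indic; case: (x \in B) => /=.
    by rewrite normr1 !mulr1.
  by rewrite normr0 !mulr0 powR0 ?gt_eqF.
by rewrite add0r poweR_EFin.
Qed.

Lemma scale_indic_Lfun (c p : R) : 0 < p ->
  (fun w => c * \1_B w) \in Lfun P p%:E.
Proof.
move=> p0; apply/andP; split.
  by rewrite inE; exact: measurable_realfun.measurable_funM.
by rewrite inE /= /finite_norm Lnorm_scale_indic// ltry.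
Qed.

End indicator_step.

Definition step_perturbation {T : Type} {R : realType} (X : T -> R) (c : R)
    (B : set T) : T -> R :=
  fun w => X w - c * \1_B w.

Section step_perturbation.
Context d (T : measurableType d) (R : realType) (P : probability T R).
Variables (p : R) (X : T -> R) (B : set T) (m c : R).
Hypotheses (mB : measurable B) (PB : P B = m%:E).

Lemma step_perturbation_Lp : 1 <= p -> Lp P p X ->
  Lp P p (step_perturbation X c B).
Proof.
move=> p1 LX; have p1E : (1 <= p%:E)%E by rewrite lee_fin.
have -> : step_perturbation X c B = X + (fun w => - c * \1_B w).
  by apply/funext => w; rewrite /step_perturbation -mulNr.
exact: (Lfun_addr_closed P p1E).2 X _ LX
  (scale_indic_Lfun mB PB (- c) (lt_le_trans ltr01 p1)).
Qed.

Lemma Lp_dist_step_perturbation : 0 < p ->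
  Lp_dist P p X (step_perturbation X c B) = ((`|c| `^ p * m) `^ p^-1)%:E.
Proof.
move=> p0; rewrite /Lp_dist -normrN -(Lnorm_scale_indic mB PB _ p0).
by apply: eq_Lnorm => w /=; rewrite /step_perturbation addrAC subrr add0r mulNr.
Qed.

Lemma integral_step_perturbation_le (u : R -> \bar R) (K M v : R) :
  (forall x y, x <= y -> (u x <= u y)%E) -> B `<=` [set w | X w <= K] ->
  (forall x, (u x <= M%:E)%E) -> (u (K - c)%R <= v%:E)%E ->
  (\int[P]_w u (step_perturbation X c B w) <= (M + (v - M) * m)%:E)%E.
Proof.
move=> u_mono BK uM uKc; rewrite -(integral_cst_add_indic mB PB).
apply: le_integral_pointwise => w; rewrite /step_perturbation /indic.
case: (boolP (w \in B)) => [/set_mem Bw | _] /=; last by rewrite !mulr0 subr0 addr0.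
rewrite !mulr1 [M + _]addrC subrK; apply: le_trans uKc; apply: u_mono.
by rewrite lerD2r; exact: BK.
Qed.

End step_perturbation.

Section nonatomic.
Context d (T : measurableType d) (R : realType) (P : probability T R).
Hypothesis P_nonatomic : nonatomic P.

Lemma nonatomic_half_subset (A : set T) (a : R) :
  measurable A -> P A = a%:E -> 0 < a ->
  exists B b, [/\ measurable B, B `<=` A, P B = b%:E, 0 < b & 2 * b <= a].
Proof.
move=> mA PA a0.
have [C [mC CA]] : exists C, [/\ measurable C, C `<=` A, (0 < P C)%E & (P C < P A)%E].
  by apply: P_nonatomic; rewrite ?PA ?lte_fin.
set c := fine (P C); have PC : P C = c%:E by rewrite fineK// fin_num_measure.
rewrite PC PA !lte_fin => c0 ca.
have [c_small|c_large] := leP (2 * c) a; first by exists C, c.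
exists (A `\` C), (a - c); split.
- exact: measurableD.
- by move=> x [].
- rewrite measureD//; last by move: PA => /= ->; exact: ltry.
  by rewrite (setIidr CA); move: PA PC => /= -> ->; rewrite EFinB.
- by rewrite subr_gt0.
- lra.
Qed.

Lemma nonatomic_subset_le_pow2 (A : set T) (a : R) :
  measurable A -> P A = a%:E -> 0 < a -> forall n,
  exists B b, [/\ measurable B, B `<=` A, P B = b%:E, 0 < b & b * 2 ^+ n <= a].
Proof.
move=> mA PA a0; elim => [|n [B [b [mB BA PB b0 ba]]]].
  by exists A, a; rewrite expr0 mulr1; split.
have [C [c [mC CB PC c0 cb]]] := nonatomic_half_subset mB PB b0.
exists C, c; split => //; first exact: subset_trans BA.
by apply: le_trans ba; rewrite exprS mulrA [c * 2]mulrC ler_wpM2r// exprn_ge0.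
Qed.

Lemma nonatomic_small_subset (A : set T) (r : R) :
  measurable A -> (0 < P A)%E -> 0 < r ->
  exists B b, [/\ measurable B, B `<=` A, P B = b%:E, 0 < b & b < r].
Proof.
move=> mA PA0 r0; set a := fine (P A).
have PA : P A = a%:E by rewrite fineK// fin_num_measure.
have a0 : 0 < a by rewrite -lte_fin -PA.
set n := Num.Def.archi_bound (a / r).
have [B [b [mB BA PB b0 ba]]] := nonatomic_subset_le_pow2 mA PA a0 n.
exists B, b; split => //.
have pow2_gt : a / r < 2 ^+ n.
  apply: lt_trans (archi_boundP _) _; first by rewrite divr_ge0// ltW.
  by rewrite -natrX ltr_nat ltn_expl.
rewrite -(ltr_pM2r (exprn_gt0 n (ltr0Sn R 1))); apply: le_lt_trans ba _.
by rewrite mulrC -ltr_pdivrMr.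
Qed.

End nonatomic.

Lemma measurable_sublevel d (T : measurableType d) (R : realType)
    (X : T -> R) (r : R) :
  measurable_fun setT X -> measurable [set w | X w <= r].
Proof.
move=> mX; rewrite (_ : [set w | X w <= r] = setT `&` X @^-1` `]-oo, r]).
  exact: mX measurableT _ (measurable_itv _).
by rewrite setTI; apply/seteqP; split => w /=; rewrite in_itv.
Qed.

Lemma sublevel_probability_gt0 d (T : measurableType d) (R : realType)
    (P : probability T R) (X : T -> R) :
  measurable_fun setT X -> exists n : nat, (0 < P [set w | (X w <= n%:R)%R])%E.
Proof.
move=> mX; apply/not_existsP => Pn0.
have cover : setT `<=` \bigcup_n [set w | X w <= n%:R].
  move=> w _; exists (Num.Def.archi_bound `|X w|) => //=.
  exact/ltW/(le_lt_trans (ler_norm _))/archi_boundP.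
have := measure_sigma_subadditive P (fun n => measurable_sublevel n%:R mX)
  measurableT cover.
rewrite eseries0; last first.
  by move=> n _ _; apply/eqP; rewrite eq_le measure_ge0 andbT leNgt; exact/negP/Pn0.
by move: (probability_setT P) => /= ->; rewrite lee_fin ler10.
Qed.

Section powR_inv.
Context (R : realType).
Implicit Types a b p : R.

Lemma powR_inv_lt a b p : 0 <= a -> 0 <= b -> 0 < p -> a < b `^ p -> a `^ p^-1 < b.
Proof.
move=> a0 b0 p0 ab; rewrite -[ltRHS](powRr1 b0) -(mulfV (lt0r_neq0 p0)) powRrM.
by apply: gt0_ltr_powR; rewrite ?invr_gt0 ?nnegrE ?powR_ge0.
Qed.

Lemma powR_inv_ge a b p : 0 <= b -> 0 < p -> b `^ p <= a -> b <= a `^ p^-1.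
Proof.
move=> b0 p0 ba; rewrite -[leLHS](powRr1 b0) -(mulfV (lt0r_neq0 p0)) powRrM.
apply: ge0_ler_powR => //; rewrite ?invr_ge0 ?nnegrE ?powR_ge0 ?(ltW p0)//.
exact: le_trans (powR_ge0 _ _) ba.
Qed.

End powR_inv.

Lemma exists_lt_of_nonconstant_le (R : realType) (u : R -> \bar R) (a : R) :
  (forall x, (u x <= a%:E)%E) -> (exists x y, u x != u y) ->
  exists y, (u y < a%:E)%E.
Proof.
move=> ua [x [y uxy]].
have [ux|ax] := ltP (u x) a%:E; first by exists x.
have [uy|ay] := ltP (u y) a%:E; first by exists y.
have ux : u x = a%:E by apply/eqP; rewrite eq_le ua ax.
have uy : u y = a%:E by apply/eqP; rewrite eq_le ua ay.
by rewrite ux uy eqxx in uxy.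
Qed.

Lemma lee_Npow_of_abse_ge (R : realType) (z : \bar R) (M eps p x : R) :
  0 < eps -> 1 <= p -> 1 <= x -> eps * M < x -> (z <= M%:E)%E ->
  ((x `^ p)%:E <= eps%:E * `|z|)%E -> (z <= (- (x `^ p / eps))%:E)%E.
Proof.
move=> eps0 p1 x1 epsMx; case: z => [r | // | _ _]; last exact: leNye.
rewrite !lee_fin /= => rM xpr.
have x_le_xp : x <= x `^ p := le1r_powR x1 p1.
have [r0|r0] := leP 0 r.
  have : eps * r <= eps * M by rewrite ler_pM2l.
  rewrite ger0_norm// in xpr; lra.
rewrite ltr0_norm// in xpr.
by rewrite lerNr ler_pdivrMr//; lra.
Qed.

Section interior_point.
Context d (T : measurableType d) (R : realType) (P : probability T R).
Variables (u : R -> \bar R) (alpha p e K : R) (X : T -> R).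
Hypotheses (P_nonatomic : nonatomic P) (p1 : 1 <= p) (e0 : 0 < e).
Hypothesis u_mono : forall x y, x <= y -> (u x <= u y)%E.
Hypothesis LX : Lp P p X.
Hypothesis X_ball : forall Y, Lp P p Y -> (Lp_dist P p X Y < e%:E)%E ->
  acceptance_set P u p alpha Y.
Hypotheses (mXK : measurable [set w | X w <= K])
  (PXK : (0 < P [set w | (X w <= K)%R])%E).

Let p_gt0 : 0 < p. Proof. exact: lt_le_trans ltr01 p1. Qed.

Lemma interior_step_contra (B : set T) (m c M v : R) :
  measurable B -> P B = m%:E -> B `<=` [set w | X w <= K] -> 0 <= c ->
  c `^ p * m < e `^ p -> (forall x, (u x <= M%:E)%E) ->
  (u (K - c)%R <= v%:E)%E -> M + (v - M) * m < alpha -> False.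
Proof.
move=> mB PB BK c0 cm_lt uM uKc val_lt.
have m_ge0 : 0 <= m by move: (measure_ge0 P B) => /=; rewrite PB lee_fin.
have dist_lt : (Lp_dist P p X (step_perturbation X c B) < e%:E)%E.
  rewrite (Lp_dist_step_perturbation X c mB PB p_gt0) lte_fin ger0_norm//.
  by apply: powR_inv_lt; rewrite ?mulr_ge0 ?powR_ge0 ?(ltW e0).
have [_] := X_ball (step_perturbation_Lp c mB PB p1 LX) dist_lt.
move/le_trans/(_ (integral_step_perturbation_le mB PB u_mono BK uM uKc)).
by rewrite lee_fin => /(lt_le_trans val_lt); rewrite ltxx.
Qed.

Lemma interior_contra_le_alpha (y0 : R) :
  (forall x, (u x <= alpha%:E)%E) -> (u y0 < alpha%:E)%E -> False.
Proof.
move=> u_le_alpha uy0_lt.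
have [v [uy0_le v_lt]] : exists v, (u y0 <= v%:E)%E /\ v < alpha.
  case: (u y0) uy0_lt => [r | // | _]; first by rewrite lte_fin; exists r.
  by exists (alpha - 1); split; [exact: leNye | lra].
pose c := Num.max 0 (K - y0).
have c0 : 0 <= c by rewrite le_max lexx.
have Kc_le : K - c <= y0 by rewrite lerBlDr -lerBlDl le_max lexx orbT.
have cp0 := powR_ge0 c p; have ep0 := powR_gt0 p e0.
pose r := e `^ p / (c `^ p + 1).
have r0 : 0 < r by rewrite divr_gt0 // ltr_wpDl.
have [B [m [mB BK PB m0 mr]]] := nonatomic_small_subset P_nonatomic mXK PXK r0.
apply: (interior_step_contra mB PB BK c0 _ u_le_alpha (le_trans (u_mono Kc_le) uy0_le)).
- have : r * (c `^ p + 1) = e `^ p by rewrite divfK // gt_eqF // ltr_wpDl.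
  nra.
- nra.
Qed.

Lemma interior_contra_growth :
  0 <= K -> (exists M, forall x, (u x <= M%:E)%E) ->
  (forall eps, 0 < eps ->
     \forall x \near +oo, ((x `^ p)%:E <= eps%:E * `| u (- x)%R |)%E) ->
  False.
Proof.
move=> K0 [M0 uM0] u_growth.
pose M := Num.max M0 (Num.max 0 alpha).
have M0_le : M0 <= M by rewrite le_max lexx.
have M_ge0 : 0 <= M by rewrite !le_max lexx !orbT.
have alpha_le : alpha <= M by rewrite !le_max lexx !orbT.
have uM x : (u x <= M%:E)%E by apply: le_trans (uM0 x) _; rewrite lee_fin.
have ep0 := powR_gt0 p e0; have twop0 := powR_gt0 p (ltr0Sn R 1).
pose t := e `^ p / (2 `^ p * 2).
have t0 : 0 < t by rewrite divr_gt0 // mulr_gt0.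
have ht : t * (2 `^ p * 2) = e `^ p by rewrite divfK // gt_eqF // mulr_gt0.
clearbody t.
(* On [B] the loss [x^p m / eps = t / eps] is then exactly [M - alpha + 1]. *)
pose eps := t / (M - alpha + 1).
have eps0 : 0 < eps by rewrite divr_gt0 //; lra.
have heps : eps * (M - alpha + 1) = t by rewrite divfK // gt_eqF //; lra.
clearbody eps.
have [N [_ HN]] := u_growth eps eps0.
pose L := Num.max (Num.max K (N + 1)) (Num.max (eps * M + 1) 1).
have [KL NL] : K <= L /\ N + 1 <= L by rewrite !le_max !lexx !orbT.
have [ML L1] : eps * M + 1 <= L /\ 1 <= L by rewrite !le_max !lexx !orbT.
clearbody L.
have Lp0 : 0 < L `^ p by apply: powR_gt0; lra.
have [B [m [mB BK PB m0 m_lt]]] :=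
  nonatomic_small_subset P_nonatomic mXK PXK (divr_gt0 t0 Lp0).
pose x := (t / m) `^ p^-1.
have hx : x `^ p * m = t.
  by rewrite -powRrM mulVf ?gt_eqF // powRr1 ?divfK ?gt_eqF // divr_ge0 // ltW.
have Lx : L <= x.
  apply: powR_inv_ge; [lra | exact: p_gt0 | rewrite ler_pdivlMr //].
  by move: m_lt; rewrite ltr_pdivlMr // mulrC => /ltW.
clearbody x.
have xp0 := powR_ge0 x p.
apply: (interior_step_contra mB PB BK (c := K + x) (v := - (x `^ p / eps)) _ _ uM).
- lra.
- have Kx_le : (K + x) `^ p <= 2 `^ p * x `^ p.
    rewrite -powRM; [|lra|lra].
    by apply: ge0_ler_powR; rewrite ?nnegrE ?(ltW p_gt0) //; lra.
  apply: le_lt_trans (ler_wpM2r (ltW m0) Kx_le) _.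
  have := mulr_gt0 t0 twop0; rewrite -mulrA hx; lra.
- rewrite opprD addrA subrr add0r.
  by apply: lee_Npow_of_abse_ge (uM _) (HN x _) => //; lra.
- have : x `^ p / eps * m = M - alpha + 1.
    by rewrite mulrAC hx -heps mulrC mulKf // gt_eqF.
  have := mulr_ge0 M_ge0 (ltW m0); lra.
Qed.

End interior_point.

Theorem lemma6p3 (d : measure_display) (T : measurableType d) (R : realType)
  (P : probability T R) (u : R -> \bar R) (alpha p : R) :
  nonatomic P ->
  utility u ->
  (exists M : R, forall x, (u x <= M%:E)%E) ->
  (exists x, (alpha%:E <= u x)%E) ->
  1 <= p ->
  ((forall x, (u x <= alpha%:E)%E) \/
   (forall eps : R, 0 < eps ->
      \forall x \near +oo, ((x `^ p)%:E <= eps%:E * `| u (- x)%R |)%E)) ->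
  Lp_interior P p (acceptance_set P u p alpha) = set0.
Proof.
move=> P_nonatomic [_ u_nonconst u_mono _] u_bounded _ p1 u_cond.
apply/seteqP; split => // X [LX [e e0 X_ball]].
have mX : measurable_fun setT X by have := sub_Lfun_mfun LX; rewrite inE.
have [n PXn] := sublevel_probability_gt0 P mX.
have mXn := measurable_sublevel n%:R mX.
case: u_cond => [u_le_alpha | u_growth].
- have [y0 uy0] := exists_lt_of_nonconstant_le u_le_alpha u_nonconst.
  exact: (interior_contra_le_alpha P_nonatomic p1 e0 u_mono LX X_ball mXn PXn
    u_le_alpha uy0).
- exact: (interior_contra_growth P_nonatomic p1 e0 u_mono LX X_ball mXn PXn
    (ler0n R n) u_bounded u_growth).
Qed.
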